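(* Let $\Phi_1,\Phi_2,\Phi_3,\Psi_1,\Psi_2,\Psi_3:\mathbb{Z}^3\to\mathbb{Q}$ be the functions defined in the context. (a) For all integers $a,b,c$ and each $i\in\{1,2,3\}$, \[ \Phi_i(a,b,c)\,\Phi_i(a-2,b-2,c)=\Phi_i(a-1,b-1,c)^2+\Phi_i(a,b,c+1)\,\Phi_i(a-2,b-2,c-1) \] and \[ \Psi_i(a,b,c)\,\Psi_i(a-2,b-2,c)=\Psi_i(a-1,b-1,c)^2+\Psi_i(a,b,c+1)\,\Psi_i(a-2,b-2,c-1). \] (b) For all integers $a,b$, \[ \Phi_1(a,b,0)\,\Phi_1(a-2,b-2,0)=\Phi_1(a-1,b-1,0)^2+\Phi_1(a,b,1)\,\Phi_1(3b-2a,2b-a,1), \] \[ \Psi_1(a,b,0)\,\Psi_1(a-2,b-2,0)=\Psi_1(a-1,b-1,0)^2+\Psi_1(a,b,1)\,\Psi_1(3b-2a,2b-a,1), \] and moreover for $i\in\{2,3\}$, \[ \Phi_i(a,b,0)\,\Phi_i(a-2,b-2,0)=\Phi_i(a-1,b-1,0)^2+\Phi_i(a,b,1)\,\Phi_{5-i}(3b-2a,2b-a,1), \] \[ \Psi_i(a,b,0)\,\Psi_i(a-2,b-2,0)=\Psi_i(a-1,b-1,0)^2+\Psi_i(a,b,1)\,\Psi_{5-i}(3b-2a,2b-a,1). \]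
   Context: For integers $a,b,c$ define $g(a,b,c)=(b-a)(b-c)+\left\lfloor\frac{(a-c)^2}{3}\right\rfloor$, $q(a,b,c)=\left\lfloor\frac{(a-b+c)^2}{4}\right\rfloor$, $\alpha(a,b,c)=2$ if $3b+a-c\equiv 1\pmod 6$, $\alpha(a,b,c)=3$ if $3b+a-c\equiv 5\pmod 6$, and $\alpha(a,b,c)=1$ otherwise; $\beta(a,b,c)=3$ if $3b+a-c\equiv 1\pmod 6$, $\beta(a,b,c)=2$ if $3b+a-c\equiv 5\pmod 6$, and $\beta(a,b,c)=1$ otherwise. Writing $g=g(a,b,c)$, $q=q(a,b,c)$ and $r=\lfloor (a-c+1)/3\rfloor$, define (exponents may be negative, so values are rational) $\Phi_1(a,b,c)=\alpha(a,b,c)\,2^{g(a,b,c+1)}5^{g}11^{q}$, $\Phi_2(a,b,c)=\alpha(a,b,c)\,2^{g(a,b,c-1)-r+(a-b)}5^{g}11^{q}$, $\Phi_3(a,b,c)=\alpha(a,b,c)\,2^{g(a,b,c-1)-r}5^{g}11^{q}$, $\Psi_1(a,b,c)=\beta(a,b,c)\,2^{g(a,b,c-1)}5^{g}11^{q}$, $\Psi_2(a,b,c)=\beta(a,b,c)\,2^{g(a,b,c+1)+r-(a-b)}5^{g}11^{q}$, $\Psi_3(a,b,c)=\beta(a,b,c)\,2^{g(a,b,c+1)+r}5^{g}11^{q}$. *)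

From mathcomp Require Import all_boot all_order all_algebra.
Set Implicit Arguments. Unset Strict Implicit. Unset Printing Implicit Defensive.
Import Order.TTheory GRing.Theory Num.Theory.
Local Open Scope ring_scope.

(* Integer floor division: for d > 0, (m %/ d)%Z is floor(m/d) and (m %% d)%Z in [0,d). *)
Definition gfun (a b c : int) : int :=
  (b - a) * (b - c) + (((a - c) ^+ 2) %/ 3)%Z.
Definition qfun (a b c : int) : int := (((a - b + c) ^+ 2) %/ 4)%Z.

Definition sres (a b c : int) : int := ((3 * b + a - c) %% 6)%Z.

Definition alpha (a b c : int) : rat :=
  if sres a b c == 1 then 2 else if sres a b c == 5 then 3 else 1.
Definition beta (a b c : int) : rat :=
  if sres a b c == 1 then 3 else if sres a b c == 5 then 2 else 1.

Definition rfun (a c : int) : int := ((a - c + 1) %/ 3)%Z.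

Definition common (a b c : int) : rat :=
  (5%:Q ^ gfun a b c) * (11%:Q ^ qfun a b c).

Definition Phi1 (a b c : int) : rat :=
  alpha a b c * 2%:Q ^ gfun a b (c + 1) * common a b c.
Definition Phi2 (a b c : int) : rat :=
  alpha a b c * 2%:Q ^ (gfun a b (c - 1) - rfun a c + (a - b)) * common a b c.
Definition Phi3 (a b c : int) : rat :=
  alpha a b c * 2%:Q ^ (gfun a b (c - 1) - rfun a c) * common a b c.
Definition Psi1 (a b c : int) : rat :=
  beta a b c * 2%:Q ^ gfun a b (c - 1) * common a b c.
Definition Psi2 (a b c : int) : rat :=
  beta a b c * 2%:Q ^ (gfun a b (c + 1) + rfun a c - (a - b)) * common a b c.
Definition Psi3 (a b c : int) : rat :=
  beta a b c * 2%:Q ^ (gfun a b (c + 1) + rfun a c) * common a b c.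

(* Indexed families; only the indices 1, 2, 3 are meaningful. *)
Definition Phi (i : nat) : int -> int -> int -> rat :=
  match i with 1%N => Phi1 | 2%N => Phi2 | _ => Phi3 end.
Definition Psi (i : nat) : int -> int -> int -> rat :=
  match i with 1%N => Psi1 | 2%N => Psi2 | _ => Psi3 end.

From mathcomp Require Import all_boot all_order all_algebra.
From mathcomp Require Import zify ring.
Import Order.TTheory GRing.Theory Num.Theory.
Local Open Scope ring_scope.

(* Each of the six functions has the shape kappa * 2^E * 5^g * 11^q, where
   kappa only depends on 3b + a - c mod 6.  Dividing a three-term identity
   F1 F2 = F3^2 + F4 F5 by F3^2 leaves powers of 2, 5 and 11 whose exponents
   are second differences of E, g and q.  The quadratic parts of these
   exponents cancel in the second differences, and the second differences of
   floor(x^2/3), floor(x^2/4) and floor((x+1)/3) are periodic, so everything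
   depends only on (a - c) mod 3 and (a - b + c) mod 2 (on a mod 3 and
   (a - b) mod 2 in part (b)): each identity is one of six numerical checks.
   In part (b) the linear term +-(a - b) of Phi2, Psi2 compensates the jump
   of floor((a - c + 1)/3) under (a, b) |-> (3b - 2a, 2b - a), which is why
   the index 2 is paired with 3. *)

Lemma sq_identity_factor (R : comPzRingType) (k1 k2 k3 k4 k5 w1 w2 w3 w4 w5 d d' : R) :
  w1 * w2 = w3 ^+ 2 * d -> w4 * w5 = w3 ^+ 2 * d' ->
  k1 * k2 * d = k3 ^+ 2 + k4 * k5 * d' ->
  k1 * w1 * (k2 * w2) = (k3 * w3) ^+ 2 + k4 * w4 * (k5 * w5).
Proof.
move=> w12 w45 k_id.
have -> : k4 * w4 * (k5 * w5) = k4 * k5 * (w4 * w5) by ring.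
transitivity (k1 * k2 * (w1 * w2)); first by ring.
rewrite w12 w45; transitivity (w3 ^+ 2 * (k1 * k2 * d)); first by ring.
by rewrite k_id; ring.
Qed.

Lemma divz_sqr3_shift (x k : int) :
  ((x + 3 * k) ^+ 2 %/ 3)%Z = (x ^+ 2 %/ 3)%Z + k * (3 * k + 2 * x).
Proof.
have -> : (x + 3 * k) ^+ 2 = k * (3 * k + 2 * x) * 3 + x ^+ 2 by ring.
by rewrite divzMDl // addrC.
Qed.

Lemma divz_sqr3_diff2 (x : int) :
  (x ^+ 2 %/ 3)%Z + ((x - 2) ^+ 2 %/ 3)%Z - 2 * ((x - 1) ^+ 2 %/ 3)%Z
  = ((x %% 3)%Z - 1) ^+ 2.
Proof.
have hx : x = (x %% 3)%Z + 3 * (x %/ 3)%Z by rewrite {1}(divz_eq x 3) addrC mulrC.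
rewrite [in LHS]hx.
have : ((x %% 3)%Z = 0 \/ (x %% 3)%Z = 1 \/ (x %% 3)%Z = 2) by lia.
move: (x %% 3)%Z (x %/ 3)%Z => r q.
rewrite !(addrAC r (3 * q)) !divz_sqr3_shift.
by case=> [->|[->|->]]; lia.
Qed.

Lemma divz_sqr4_diff2 (y : int) :
  ((y + 1) ^+ 2 %/ 4)%Z + ((y - 1) ^+ 2 %/ 4)%Z - 2 * (y ^+ 2 %/ 4)%Z = (y %% 2)%Z.
Proof.
have hy : y = (y %% 2)%Z + 2 * (y %/ 2)%Z by rewrite {1}(divz_eq y 2) addrC mulrC.
rewrite [in LHS]hy.
have : ((y %% 2)%Z = 0 \/ (y %% 2)%Z = 1) by lia.
move: (y %% 2)%Z (y %/ 2)%Z => r q.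
have shift x : ((x + 2 * q) ^+ 2 %/ 4)%Z = (x ^+ 2 %/ 4)%Z + q * (q + x).
  have -> : (x + 2 * q) ^+ 2 = q * (q + x) * 4 + x ^+ 2 by ring.
  by rewrite divzMDl // addrC.
rewrite !(addrAC r (2 * q)) !shift.
by case=> ->; lia.
Qed.

Definition sq_defect (f : int -> int -> int -> int) (a b c : int) : int :=
  f a b c + f (a - 2) (b - 2) c - 2 * f (a - 1) (b - 1) c.

Definition cross_defect (f : int -> int -> int -> int) (a b c : int) : int :=
  f a b (c + 1) + f (a - 2) (b - 2) (c - 1) - 2 * f (a - 1) (b - 1) c.

Definition boundary_defect (f g : int -> int -> int -> int) (a b : int) : int :=
  f a b 1 + g (3 * b - 2 * a) (2 * b - a) 1 - 2 * f (a - 1) (b - 1) 0.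

Lemma rfun_sq_defect (a c : int) :
  rfun a c + rfun (a - 2) c - 2 * rfun (a - 1) c = ((a - c) %% 3)%Z - 1.
Proof. rewrite /rfun; lia. Qed.

Lemma rfun_cross_defect (a c : int) :
  rfun a (c + 1) + rfun (a - 2) (c - 1) = 2 * rfun (a - 1) c.
Proof. rewrite /rfun; lia. Qed.

Lemma rfun_boundary_defect (a b : int) :
  rfun a 1 + rfun (3 * b - 2 * a) 1 = 2 * rfun (a - 1) 0 + (b - a).
Proof. rewrite /rfun; lia. Qed.

Lemma gfun_sq_defect (a b c : int) :
  sq_defect gfun a b c = (((a - c) %% 3)%Z - 1) ^+ 2.
Proof.
rewrite -divz_sqr3_diff2 /sq_defect /gfun.
have -> : a - 2 - c = a - c - 2 by ring.
have -> : a - 1 - c = a - c - 1 by ring.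
ring.
Qed.

Lemma gfun_cross_defect (a b c : int) : cross_defect gfun a b c = 0.
Proof.
rewrite /cross_defect /gfun.
have -> : a - (c + 1) = a - 1 - c by ring.
have -> : a - 2 - (c - 1) = a - 1 - c by ring.
ring.
Qed.

Lemma gfun_boundary (c a b : int) :
  gfun a b (c + 1) + gfun (3 * b - 2 * a) (2 * b - a) (c + 1) = 2 * gfun (a - 1) (b - 1) c.
Proof.
rewrite /gfun.
have -> : a - (c + 1) = a - 1 - c by ring.
have -> : 3 * b - 2 * a - (c + 1) = a - 1 - c + 3 * (b - a) by ring.
rewrite divz_sqr3_shift; ring.
Qed.

Lemma gfun_boundary_defect (a b : int) : boundary_defect gfun gfun a b = 0.
Proof. by rewrite /boundary_defect -[1]add0r gfun_boundary subrr. Qed.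

Lemma qfun_sq_defect (a b c : int) : sq_defect qfun a b c = 0.
Proof.
rewrite /sq_defect /qfun.
have -> : a - 2 - (b - 2) + c = a - b + c by ring.
have -> : a - 1 - (b - 1) + c = a - b + c by ring.
ring.
Qed.

Lemma qfun_cross_defect (a b c : int) : cross_defect qfun a b c = ((a - b + c) %% 2)%Z.
Proof.
rewrite -divz_sqr4_diff2 /cross_defect /qfun.
have -> : a - b + (c + 1) = a - b + c + 1 by ring.
have -> : a - 2 - (b - 2) + (c - 1) = a - b + c - 1 by ring.
have -> : a - 1 - (b - 1) + c = a - b + c by ring.
ring.
Qed.

Lemma qfun_boundary_defect (a b : int) : boundary_defect qfun qfun a b = ((a - b) %% 2)%Z.
Proof.
rewrite -divz_sqr4_diff2 /boundary_defect /qfun.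
have -> : 3 * b - 2 * a - (2 * b - a) + 1 = - (a - b - 1) by ring.
have -> : a - 1 - (b - 1) + 0 = a - b by ring.
rewrite sqrrN; ring.
Qed.

Definition two_exp (s t u a b c : int) : int :=
  gfun a b (c + s) + t * rfun a c + u * (a - b).

Lemma two_exp_sq_defect (s t u a b c : int) :
  sq_defect (two_exp s t u) a b c
  = (((a - (c + s)) %% 3)%Z - 1) ^+ 2 + t * (((a - c) %% 3)%Z - 1).
Proof.
by rewrite -(gfun_sq_defect a b (c + s)) -(rfun_sq_defect a c) /sq_defect /two_exp; ring.
Qed.

Lemma two_exp_cross_defect (s t u a b c : int) : cross_defect (two_exp s t u) a b c = 0.
Proof.
transitivity (cross_defect gfun a b (c + s)
  + t * (rfun a (c + 1) + rfun (a - 2) (c - 1) - 2 * rfun (a - 1) c)).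
  by rewrite /cross_defect /two_exp !(addrAC c _ s); ring.
by rewrite gfun_cross_defect rfun_cross_defect subrr mulr0 addr0.
Qed.

Lemma two_exp_boundary_defect (s t u u' a b : int) : t + u + u' = 0 ->
  boundary_defect (two_exp s t u) (two_exp s t u') a b = 0.
Proof.
move=> tuu'.
transitivity (gfun a b (s + 1) + gfun (3 * b - 2 * a) (2 * b - a) (s + 1)
    - 2 * gfun (a - 1) (b - 1) s
  + t * (rfun a 1 + rfun (3 * b - 2 * a) 1 - 2 * rfun (a - 1) 0 - (b - a))
  + (b - a) * (t + u + u')).
  by rewrite /boundary_defect /two_exp add0r (addrC 1 s); ring.
by rewrite gfun_boundary rfun_boundary_defect tuu'; ring.
Qed.

Definition weight (e f h : int) : rat := 2%:Q ^ e * (5%:Q ^ f * 11%:Q ^ h).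

Lemma weightM (e f h e' f' h' : int) :
  weight e f h * weight e' f' h' = weight (e + e') (f + f') (h + h').
Proof. by rewrite /weight !expfzDr //; ring. Qed.

Lemma weight_defect (e1 e2 e3 f1 f2 f3 h1 h2 h3 : int) :
  weight e1 f1 h1 * weight e2 f2 h2
  = weight e3 f3 h3 ^+ 2 * weight (e1 + e2 - 2 * e3) (f1 + f2 - 2 * f3) (h1 + h2 - 2 * h3).
Proof. by rewrite expr2 !weightM; congr weight; ring. Qed.

Definition family (kappa : int -> int -> int -> rat) (E : int -> int -> int -> int)
    (a b c : int) : rat :=
  kappa a b c * 2%:Q ^ E a b c * common a b c.

Lemma familyE (kappa : int -> int -> int -> rat) (E : int -> int -> int -> int) (a b c : int) :
  family kappa E a b c = kappa a b c * weight (E a b c) (gfun a b c) (qfun a b c).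
Proof. by rewrite /family /weight /common !mulrA. Qed.

Definition recurrence (F : int -> int -> int -> rat) (a b c : int) : Prop :=
  F a b c * F (a - 2) (b - 2) c
  = F (a - 1) (b - 1) c ^+ 2 + F a b (c + 1) * F (a - 2) (b - 2) (c - 1).

Definition boundary_recurrence (F G : int -> int -> int -> rat) (a b : int) : Prop :=
  F a b 0 * F (a - 2) (b - 2) 0
  = F (a - 1) (b - 1) 0 ^+ 2 + F a b 1 * G (3 * b - 2 * a) (2 * b - a) 1.

Lemma recurrence_ext {F G : int -> int -> int -> rat} :
  (forall a b c, F a b c = G a b c) ->
  forall a b c, recurrence G a b c -> recurrence F a b c.
Proof. by move=> FG a b c; rewrite /recurrence !FG. Qed.

Lemma boundary_recurrence_ext {F G F' G' : int -> int -> int -> rat} :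
  (forall a b c, F a b c = F' a b c) -> (forall a b c, G a b c = G' a b c) ->
  forall a b, boundary_recurrence F' G' a b -> boundary_recurrence F G a b.
Proof. by move=> FF' GG' a b; rewrite /boundary_recurrence !FF' GG'. Qed.

Lemma family_recurrence (kappa : int -> int -> int -> rat) (E : int -> int -> int -> int)
    (a b c : int) :
  kappa a b c * kappa (a - 2) (b - 2) c
    * weight (sq_defect E a b c) (sq_defect gfun a b c) (sq_defect qfun a b c)
  = kappa (a - 1) (b - 1) c ^+ 2 + kappa a b (c + 1) * kappa (a - 2) (b - 2) (c - 1)
    * weight (cross_defect E a b c) (cross_defect gfun a b c) (cross_defect qfun a b c) ->
  recurrence (family kappa E) a b c.
Proof. by rewrite /recurrence !familyE; apply: sq_identity_factor; apply: weight_defect. Qed.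

Lemma family_boundary_recurrence (kappa : int -> int -> int -> rat)
    (E E' : int -> int -> int -> int) (a b : int) :
  kappa a b 0 * kappa (a - 2) (b - 2) 0
    * weight (sq_defect E a b 0) (sq_defect gfun a b 0) (sq_defect qfun a b 0)
  = kappa (a - 1) (b - 1) 0 ^+ 2 + kappa a b 1 * kappa (3 * b - 2 * a) (2 * b - a) 1
    * weight (boundary_defect E E' a b) (boundary_defect gfun gfun a b)
        (boundary_defect qfun qfun a b) ->
  boundary_recurrence (family kappa E) (family kappa E') a b.
Proof.
by rewrite /boundary_recurrence !familyE; apply: sq_identity_factor; apply: weight_defect.
Qed.

Lemma two_exp_recurrence (kappa : int -> int -> int -> rat) (s t u a b c : int) :
  kappa a b c * kappa (a - 2) (b - 2) c
    * weight ((((a - (c + s)) %% 3)%Z - 1) ^+ 2 + t * (((a - c) %% 3)%Z - 1))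
        ((((a - c) %% 3)%Z - 1) ^+ 2) 0
  = kappa (a - 1) (b - 1) c ^+ 2
    + kappa a b (c + 1) * kappa (a - 2) (b - 2) (c - 1) * weight 0 0 ((a - b + c) %% 2)%Z ->
  recurrence (family kappa (two_exp s t u)) a b c.
Proof.
move=> h; apply: family_recurrence.
by rewrite two_exp_sq_defect gfun_sq_defect qfun_sq_defect two_exp_cross_defect
  gfun_cross_defect qfun_cross_defect.
Qed.

Lemma two_exp_boundary_recurrence (kappa : int -> int -> int -> rat) (s t u u' a b : int) :
  t + u + u' = 0 ->
  kappa a b 0 * kappa (a - 2) (b - 2) 0
    * weight ((((a - s) %% 3)%Z - 1) ^+ 2 + t * ((a %% 3)%Z - 1)) (((a %% 3)%Z - 1) ^+ 2) 0
  = kappa (a - 1) (b - 1) 0 ^+ 2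
    + kappa a b 1 * kappa (3 * b - 2 * a) (2 * b - a) 1 * weight 0 0 ((a - b) %% 2)%Z ->
  boundary_recurrence (family kappa (two_exp s t u)) (family kappa (two_exp s t u')) a b.
Proof.
move=> tuu' h; apply: family_boundary_recurrence.
by rewrite two_exp_sq_defect gfun_sq_defect qfun_sq_defect
  (two_exp_boundary_defect _ _ _ _ _ _ tuu') gfun_boundary_defect qfun_boundary_defect
  add0r !subr0.
Qed.

Lemma Phi1E (a b c : int) : Phi1 a b c = family alpha (two_exp 1 0 0) a b c.
Proof. by rewrite /Phi1 /family /two_exp !mul0r !addr0. Qed.

Lemma Phi2E (a b c : int) : Phi2 a b c = family alpha (two_exp (-1) (-1) 1) a b c.
Proof. by rewrite /Phi2 /family /two_exp mulN1r mul1r. Qed.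

Lemma Phi3E (a b c : int) : Phi3 a b c = family alpha (two_exp (-1) (-1) 0) a b c.
Proof. by rewrite /Phi3 /family /two_exp mulN1r mul0r addr0. Qed.

Lemma Psi1E (a b c : int) : Psi1 a b c = family beta (two_exp (-1) 0 0) a b c.
Proof. by rewrite /Psi1 /family /two_exp !mul0r !addr0. Qed.

Lemma Psi2E (a b c : int) : Psi2 a b c = family beta (two_exp 1 1 (-1)) a b c.
Proof. by rewrite /Psi2 /family /two_exp mul1r mulN1r. Qed.

Lemma Psi3E (a b c : int) : Psi3 a b c = family beta (two_exp 1 1 0) a b c.
Proof. by rewrite /Psi3 /family /two_exp mul1r mul0r addr0. Qed.

(* After case splitting on [x mod 3] and [y mod 2], every residue [X %% m]
   in the goal is determined, and lia finds its value; the goal then becomes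
   a closed identity between rationals. *)
Ltac eval_mod X m :=
  first [ have -> : (X %% m)%Z = 0 by lia | have -> : (X %% m)%Z = 1 by lia
        | have -> : (X %% m)%Z = 2 by lia | have -> : (X %% m)%Z = 3 by lia
        | have -> : (X %% m)%Z = 4 by lia | have -> : (X %% m)%Z = 5 by lia ].

Ltac solve_by_residues x y :=
  (have : (x %% 3 = 0 \/ x %% 3 = 1 \/ x %% 3 = 2)%Z by lia);
  (have : (y %% 2 = 0 \/ y %% 2 = 1)%Z by lia);
  rewrite /alpha /beta /sres;
  case=> ? [?|[?|?]];
  repeat match goal with |- context[(?X %% ?m)%Z] => eval_mod X m end;
  by apply/eqP; vm_compute.

Lemma Phi_recurrence (a b c : int) :
  [/\ recurrence Phi1 a b c, recurrence Phi2 a b c & recurrence Phi3 a b c].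
Proof.
split; [apply: (recurrence_ext Phi1E) | apply: (recurrence_ext Phi2E)
       | apply: (recurrence_ext Phi3E)];
  apply: two_exp_recurrence; solve_by_residues (a - c) (a - b + c).
Qed.

Lemma Psi_recurrence (a b c : int) :
  [/\ recurrence Psi1 a b c, recurrence Psi2 a b c & recurrence Psi3 a b c].
Proof.
split; [apply: (recurrence_ext Psi1E) | apply: (recurrence_ext Psi2E)
       | apply: (recurrence_ext Psi3E)];
  apply: two_exp_recurrence; solve_by_residues (a - c) (a - b + c).
Qed.

Lemma Phi_boundary_recurrence (a b : int) :
  [/\ boundary_recurrence Phi1 Phi1 a b, boundary_recurrence Phi2 Phi3 a b
    & boundary_recurrence Phi3 Phi2 a b].
Proof.
split; [apply: (boundary_recurrence_ext Phi1E Phi1E)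
       | apply: (boundary_recurrence_ext Phi2E Phi3E)
       | apply: (boundary_recurrence_ext Phi3E Phi2E)];
  apply: two_exp_boundary_recurrence => //; solve_by_residues a (a - b).
Qed.

Lemma Psi_boundary_recurrence (a b : int) :
  [/\ boundary_recurrence Psi1 Psi1 a b, boundary_recurrence Psi2 Psi3 a b
    & boundary_recurrence Psi3 Psi2 a b].
Proof.
split; [apply: (boundary_recurrence_ext Psi1E Psi1E)
       | apply: (boundary_recurrence_ext Psi2E Psi3E)
       | apply: (boundary_recurrence_ext Psi3E Psi2E)];
  apply: two_exp_boundary_recurrence => //; solve_by_residues a (a - b).
Qed.

Theorem lemma4p2 :
  (* (a) *)
  (forall (i : nat) (a b c : int), (1 <= i <= 3)%N ->
     Phi i a b c * Phi i (a - 2) (b - 2) c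
       = Phi i (a - 1) (b - 1) c ^+ 2 + Phi i a b (c + 1) * Phi i (a - 2) (b - 2) (c - 1)
   /\ Psi i a b c * Psi i (a - 2) (b - 2) c
       = Psi i (a - 1) (b - 1) c ^+ 2 + Psi i a b (c + 1) * Psi i (a - 2) (b - 2) (c - 1))
  /\
  (* (b) *)
  (forall a b : int,
     Phi 1 a b 0 * Phi 1 (a - 2) (b - 2) 0
       = Phi 1 (a - 1) (b - 1) 0 ^+ 2 + Phi 1 a b 1 * Phi 1 (3 * b - 2 * a) (2 * b - a) 1
   /\ Psi 1 a b 0 * Psi 1 (a - 2) (b - 2) 0
       = Psi 1 (a - 1) (b - 1) 0 ^+ 2 + Psi 1 a b 1 * Psi 1 (3 * b - 2 * a) (2 * b - a) 1)
  /\
  (forall (i : nat) (a b : int), (2 <= i <= 3)%N ->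
     Phi i a b 0 * Phi i (a - 2) (b - 2) 0
       = Phi i (a - 1) (b - 1) 0 ^+ 2 + Phi i a b 1 * Phi (5 - i) (3 * b - 2 * a) (2 * b - a) 1
   /\ Psi i a b 0 * Psi i (a - 2) (b - 2) 0
       = Psi i (a - 1) (b - 1) 0 ^+ 2 + Psi i a b 1 * Psi (5 - i) (3 * b - 2 * a) (2 * b - a) 1).
Proof.
split; [|split].
- move=> i a b c /andP[].
  have [Phi1r Phi2r Phi3r] := Phi_recurrence a b c.
  have [Psi1r Psi2r Psi3r] := Psi_recurrence a b c.
  by case: i => [|[|[|[|i]]]] // _ _; split.
- move=> a b.
  have [Phi11 _ _] := Phi_boundary_recurrence a b.
  have [Psi11 _ _] := Psi_boundary_recurrence a b.
  by split.
- move=> i a b /andP[].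
  have [_ Phi23 Phi32] := Phi_boundary_recurrence a b.
  have [_ Psi23 Psi32] := Psi_boundary_recurrence a b.
  by case: i => [|[|[|[|i]]]] // _ _; split.
Qed.
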